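(* For $n\ge 4$, the dom-stability of the path $P_n$ is $St_{dom}(P_n)=2$ if $n\equiv 3\pmod 4$, and $St_{dom}(P_n)=1$ otherwise.
   Context: A dominated coloring of a graph is a proper coloring in which every color class is dominated by at least one vertex, i.e. for each color class $C$ there is a vertex adjacent to every vertex of $C$; $\chi_{dom}(G)$ is the minimum number of colors in a dominated coloring. The dom-stability $St_{dom}(G)$ is the minimum number of vertices of $G$ whose removal changes the dominated chromatic number of $G$. *)

From mathcomp Require Import all_boot.
Set Implicit Arguments. Unset Strict Implicit. Unset Printing Implicit Defensive.

(* A (simple) graph is an adjacency relation e : rel T on a finType T.
   All notions below are taken for the induced subgraph G[S], S : {set T}. *)

(* Convention: a class consisting of a single
   isolated vertex of G[S] is also considered dominated. *)
Definition dom_coloring (T : finType) (e : rel T) (S : {set T}) (k : nat)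
    (c : T -> nat) : bool :=
  [&& [forall x in S, c x < k],
      [forall x in S, forall y in S, e x y ==> (c x != c y)] &
      [forall x in S,
         [exists v in S, forall y in S, (c y == c x) ==> e v y]
         || ([forall y in S, (c y == c x) ==> (y == x)]
             && [forall y in S, ~~ e x y])]].

(* G[S] admits a dominated coloring with (at most) k colors.
   Colors are taken in 'I_(#|T|.+1), which loses nothing since k <= #|T|
   colors always suffice for the minimum considered below. *)
Definition has_dom_coloring (T : finType) (e : rel T) (S : {set T}) (k : nat)
  : bool :=
  [exists c : {ffun T -> 'I_(#|T|.+1)}, dom_coloring e S k (fun x => c x)].

(* dominated chromatic number of G[S]: least k <= #|T| admitting a dominated
   coloring with k colors (every vertex its own color always works). *)
Definition chi_dom (T : finType) (e : rel T) (S : {set T}) : nat :=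
  \big[minn/#|T|]_(k < #|T|.+1 | has_dom_coloring e S k) (k : nat).

Definition St_dom (T : finType) (e : rel T) : nat :=
  \big[minn/#|T|]_(X : {set T} | chi_dom e (~: X) != chi_dom e [set: T]) #|X|.

Definition path_rel (n : nat) : rel 'I_n :=
  fun i j => (i.+1 == j :> nat) || (j.+1 == i :> nat).
Arguments path_rel n : clear implicits.

(* Deleting vertices of P_n leaves a disjoint union of paths, and chi_dom of
   such a union is the sum of f(m) = 2 (m / 4) + min (m mod 4) 2 over its
   components P_m.  Colouring 4q and 4q+2 with 2q (a class dominated by 4q+1)
   and 4q+1, 4q+3 with 2q+1 (dominated by 4q+2) uses f(m) colours, while the
   f(m) vertices congruent to 0 or 1 mod 4 pairwise have no common neighbour,
   hence need distinct colours; both certificates add up over components.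
   Deleting vertex i thus gives f(i) + f(n-1-i), which equals f(n) for every
   i exactly when n = 3 mod 4, and then deleting the first two vertices gives
   f(n-2) <> f(n). *)

From HB Require Import structures.
From mathcomp Require Import all_boot zify.
Set Implicit Arguments. Unset Strict Implicit. Unset Printing Implicit Defensive.

HB.instance Definition _ := SemiGroup.isComLaw.Build nat minn minnA minnC.

Lemma bigminn_le (I : finType) (P : pred I) (F : I -> nat) d i :
  P i -> \big[minn/d]_(j | P j) F j <= F i.
Proof. by move=> Pi; rewrite (bigD1 i) //= geq_minl. Qed.

Lemma bigminn_ge (I : finType) (P : pred I) (F : I -> nat) d m :
  m <= d -> (forall i, P i -> m <= F i) -> m <= \big[minn/d]_(i | P i) F i.
Proof. by move=> le_md le_mF; elim/big_ind: _ => // x y; rewrite leq_min => ->. Qed.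

Section DominatedColoring.

Variables (T : finType) (e : rel T).

Definition class_dominated (S : {set T}) (c : T -> nat) x :=
  (exists2 v, v \in S & {in S, forall y, c y = c x -> e v y})
  \/ {in S, forall y, c y = c x -> y = x} /\ {in S, forall y, ~~ e x y}.

Lemma dom_coloringP (S : {set T}) k c :
  reflect
    [/\ {in S, forall x, c x < k},
        {in S &, forall x y, e x y -> c x != c y} &
        {in S, forall x, class_dominated S c x}]
    (dom_coloring e S k c).
Proof.
apply: (iffP and3P) => [[/forall_inP lt_k /forall_inP proper /forall_inP dom]
                      | [lt_k proper dom]]; split.
- exact: lt_k.
- by move=> x y xS yS; apply/implyP; move/forall_inP: (proper x xS); apply.
- move=> x /dom /orP[/exists_inP[v vS /forall_inP dom_v]
                    | /andP[/forall_inP one /forall_inP iso]].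
    by left; exists v => // y yS cyx; apply: (implyP (dom_v y yS)); rewrite cyx.
  right; split=> y yS; last exact: iso.
  by move=> cyx; apply/eqP; apply: (implyP (one y yS)); rewrite cyx.
- exact/forall_inP.
- by apply/forall_inP => x xS; apply/forall_inP => y yS; apply/implyP; apply: proper.
- apply/forall_inP => x /dom[[v vS dom_v] | [one iso]]; apply/orP; [left | right].
    apply/exists_inP; exists v => //.
    by apply/forall_inP => y yS; apply/implyP => /eqP /(dom_v y yS).
  apply/andP; split; apply/forall_inP => y yS; last exact: iso.
  by apply/implyP => /eqP /(one y yS) ->.
Qed.

Lemma class_dominated_sub (S S' : {set T}) c c' x :
  S' \subset S ->
  {in S, forall y, c y = c x -> y \in S' /\ c' y = c' x} ->
  {in S, forall y, e x y -> y \in S'} ->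
  class_dominated S' c' x -> class_dominated S c x.
Proof.
move=> /subsetP sS'S same_class nbr_in [[v vS' dom_v] | [one iso]].
  left; exists v; first exact: sS'S.
  by move=> y yS /(same_class y yS)[yS' cyx]; apply: dom_v.
right; split=> y yS; first by case/(same_class y yS); apply: one.
by apply/negP => exy; have := iso y (nbr_in y yS exy); rewrite exy.
Qed.

Lemma has_dom_coloring_of (S : {set T}) k c :
  k <= #|T| -> dom_coloring e S k c -> has_dom_coloring e S k.
Proof.
move=> le_kT /dom_coloringP[lt_k proper dom].
pose c' := [ffun x => inord (c x) : 'I_#|T|.+1].
have c'E : {in S, forall x, c' x = c x :> nat}.
  by move=> x xS; rewrite ffunE inordK // ltnS (leq_trans (ltnW (lt_k x xS))).
apply/existsP; exists c'; apply/dom_coloringP; split=> [x xS | x y xS yS | x xS].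
- by rewrite c'E //; apply: lt_k.
- by rewrite !c'E //; apply: proper.
rewrite /class_dominated c'E //; case: (dom x xS) => [[v vS dom_v] | [one iso]].
  by left; exists v => // y yS; rewrite c'E //; apply: dom_v.
by right; split=> // y yS; rewrite c'E //; apply: one.
Qed.

Lemma dom_coloring_common_neighbor (S : {set T}) k c x y :
  dom_coloring e S k c -> x \in S -> y \in S -> x != y -> c x = c y ->
  exists2 w, w \in S & e w x && e w y.
Proof.
case/dom_coloringP=> _ _ dom xS yS /eqP neq_xy cxy.
case: (dom x xS) => [[w wS dom_w] | [one _]].
  by exists w; rewrite // dom_w // dom_w.
by case: neq_xy; rewrite (one y yS).
Qed.

Definition scattered (S A : {set T}) :=
  A \subset S /\ {in A &, forall x y, x != y -> {in S, forall w, ~~ (e w x && e w y)}}.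

Lemma scattered_card_le (S A : {set T}) k c :
  dom_coloring e S k c -> scattered S A -> #|A| <= k.
Proof.
move=> col [sAS scatA].
have inj_c : {in A &, injective c}.
  move=> x y xA yA cxy; apply/eqP; apply/negPn/negP => neq_xy.
  have [w wS adj_w] :=
    dom_coloring_common_neighbor col (subsetP sAS x xA) (subsetP sAS y yA) neq_xy cxy.
  by move: (scatA x y xA yA neq_xy w wS); rewrite adj_w.
case/dom_coloringP: col => lt_k _ _.
rewrite cardE -(size_map c) -(size_iota 0 k); apply: uniq_leq_size.
  by rewrite map_inj_in_uniq ?enum_uniq // => x y; rewrite !mem_enum; apply: inj_c.
by move=> _ /mapP[x xA ->]; rewrite mem_iota lt_k // (subsetP sAS) // -mem_enum.
Qed.

Lemma chi_dom_eq (S A : {set T}) k c :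
  dom_coloring e S k c -> scattered S A -> #|A| = k -> chi_dom e S = k.
Proof.
move=> col scatA cardA; have le_kT : k <= #|T| by rewrite -cardA max_card.
apply/eqP; rewrite eqn_leq; apply/andP; split.
  exact: (@bigminn_le _ _ _ _ (Ordinal (le_kT : k < #|T|.+1)) (has_dom_coloring_of le_kT col)).
apply: bigminn_ge => // i /existsP[c' col']; rewrite -cardA.
exact: scattered_card_le col' scatA.
Qed.

Lemma St_dom_eq (X : {set T}) :
  chi_dom e (~: X) != chi_dom e [set: T] ->
  (forall Y : {set T}, #|Y| < #|X| -> chi_dom e (~: Y) = chi_dom e [set: T]) ->
  St_dom e = #|X|.
Proof.
move=> changes stable; apply/eqP; rewrite eqn_leq bigminn_le //=.
apply: bigminn_ge => [|Y]; first exact: max_card.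
by rewrite leqNgt; apply: contra => /stable ->.
Qed.

Section SeparatedUnion.

Variables S1 S2 : {set T}.
Hypothesis disj12 : [disjoint S1 & S2].
Hypothesis sep12 : {in S1 & S2, forall x y, ~~ e x y && ~~ e y x}.

Lemma separated_edge x y :
  x \in S1 :|: S2 -> y \in S1 :|: S2 -> e x y -> (x \in S1) = (y \in S1).
Proof.
rewrite !inE => /orP[x1 | x2] /orP[y1 | y2] exy.
- by rewrite x1 y1.
- by have /andP[/negP] := sep12 x1 y2.
- by have /andP[_ /negP] := sep12 y1 x2.
- by rewrite (disjointFl disj12 x2) (disjointFl disj12 y2).
Qed.

Lemma dom_coloring_setU k1 k2 c1 c2 :
  dom_coloring e S1 k1 c1 -> dom_coloring e S2 k2 c2 ->
  dom_coloring e (S1 :|: S2) (k1 + k2) (fun x => if x \in S1 then c1 x else k1 + c2 x).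
Proof.
move=> /dom_coloringP[lt1 proper1 dom1] /dom_coloringP[lt2 proper2 dom2].
set c := fun x => _.
have in2 x : x \in S1 :|: S2 -> x \notin S1 -> x \in S2 by rewrite inE => /orP[->|].
have side : {in S1 :|: S2 &, forall x y, c y = c x -> (y \in S1) = (x \in S1)}.
  move=> x y xS yS; rewrite /c /=; case: ifP => y1; case: ifP => x1 // cyx.
    by have := lt1 y y1; rewrite cyx ltnNge leq_addr.
  by have := lt1 x x1; rewrite -cyx ltnNge leq_addr.
apply/dom_coloringP; split=> [x xS | x y xS yS exy | x xS].
- rewrite /c /=; case: ifP => x1; first by rewrite ltn_addr ?lt1.
  by rewrite ltn_add2l lt2 ?in2 ?x1.
- have same_side := separated_edge xS yS exy; rewrite /c /= -same_side.
  case: ifP same_side => x1 y1; first by apply: proper1; rewrite -?y1.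
  by rewrite eqn_add2l; apply: proper2; rewrite // in2 ?x1 -?y1.
case: (boolP (x \in S1)) => x1.
  apply: (class_dominated_sub (subsetUl _ _) _ _ (dom1 x x1)) => y yS.
    move=> cyx; have y1 : y \in S1 by rewrite (side x y).
    by move: cyx; rewrite /c /= x1 y1; split.
  by move/(separated_edge xS yS); rewrite x1.
have x2 := in2 x xS x1; move/negbTE: x1 => x1.
apply: (class_dominated_sub (subsetUr _ _) _ _ (dom2 x x2)) => y yS.
  move=> cyx; have y1 : y \in S1 = false by rewrite (side x y).
  by move: cyx; rewrite /c /= x1 y1 => /addnI; split; rewrite // in2 ?y1.
by move/(separated_edge xS yS); rewrite x1 => /esym/negbT/(in2 y yS).
Qed.

Lemma scattered_setU A1 A2 :
  scattered S1 A1 -> scattered S2 A2 -> scattered (S1 :|: S2) (A1 :|: A2).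
Proof.
move=> [sA1 scat1] [sA2 scat2]; split; first exact: setUSS.
have sAS := subsetP (setUSS sA1 sA2).
have inA1 z : z \in A1 :|: A2 -> (z \in A1) = (z \in S1).
  case/setUP=> [zA1 | zA2]; first by rewrite zA1 (subsetP sA1).
  have zS1 : z \in S1 = false := disjointFl disj12 (subsetP sA2 z zA2).
  by rewrite zS1; apply/negbTE; apply: contraFN zS1 => /(subsetP sA1).
move=> x y xA yA neq_xy w wS; apply/negP => /andP[ewx ewy].
have xA1 : (x \in A1) = (w \in S1) by rewrite inA1 // (separated_edge wS (sAS x xA) ewx).
have yA1 : (y \in A1) = (w \in S1) by rewrite inA1 // (separated_edge wS (sAS y yA) ewy).
case: (boolP (w \in S1)) => w1.
  by have := scat1 x y; rewrite xA1 yA1 => /(_ w1 w1 neq_xy w w1); rewrite ewx ewy.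
have w2 : w \in S2 by case/setUP: wS w1 => [->|].
have x2 : x \in A2 by move: xA; rewrite inE xA1 (negbTE w1).
have y2 : y \in A2 by move: yA; rewrite inE yA1 (negbTE w1).
by have := scat2 x y x2 y2 neq_xy w w2; rewrite ewx ewy.
Qed.

Lemma chi_dom_setU k1 k2 c1 c2 A1 A2 :
  dom_coloring e S1 k1 c1 -> scattered S1 A1 -> #|A1| = k1 ->
  dom_coloring e S2 k2 c2 -> scattered S2 A2 -> #|A2| = k2 ->
  chi_dom e (S1 :|: S2) = k1 + k2.
Proof.
move=> col1 scat1 card1 col2 scat2 card2.
apply: chi_dom_eq (dom_coloring_setU col1 col2) (scattered_setU scat1 scat2) _.
have disjA := disjointW scat1.1 scat2.1 disj12.
by rewrite cardsU (disjoint_setI0 disjA) cards0 subn0 card1 card2.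
Qed.

End SeparatedUnion.

End DominatedColoring.

Definition chi_path m := 2 * (m %/ 4) + minn (m %% 4) 2.

Definition path_color p := 2 * (p %/ 4) + p %% 2.

Definition path_witness j := 4 * (j %/ 2) + j %% 2.

Lemma path_color_lt m p : p < m -> path_color p < chi_path m.
Proof. rewrite /path_color /chi_path; lia. Qed.

Lemma path_colorS p : path_color p.+1 != path_color p.
Proof. rewrite /path_color; lia. Qed.

Lemma path_color_dominated m p : 1 < m -> p < m ->
  exists2 d, d < m &
    forall q, q < m -> path_color q = path_color p -> (d.+1 == q) || (q.+1 == d).
Proof.
rewrite /path_color => m_gt1 p_lt.
have [p_hi | p_lo] := leqP 2 (p %% 4); first by exists p.-1 => [|q]; lia.
have [p1_lt | p_last] := ltnP p.+1 m; first by exists p.+1 => [|q]; lia.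
by exists p.-1 => [|q]; lia.
Qed.

Lemma path_witness_lt m j : j < chi_path m -> path_witness j < m.
Proof. rewrite /path_witness /chi_path; lia. Qed.

Lemma path_witness_inj : injective path_witness.
Proof. move=> i j; rewrite /path_witness; lia. Qed.

Lemma path_witness_addn2 i j : path_witness i + 2 != path_witness j.
Proof. rewrite /path_witness; lia. Qed.

Lemma chi_path_splitE n i :
  n %% 4 = 3 -> i < n -> chi_path i + chi_path (n - i.+1) = chi_path n.
Proof. rewrite /chi_path; lia. Qed.

Lemma chi_path_drop_two_neq n : n %% 4 = 3 -> chi_path (n - 2) != chi_path n.
Proof. rewrite /chi_path; lia. Qed.

Lemma chi_path_split_neq n : 4 <= n -> n %% 4 != 3 ->
  exists2 i, i < n & chi_path i + chi_path (n - i.+1) != chi_path n.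
Proof.
rewrite /chi_path => n_ge4 n_mod.
by have [n_mod0 | n_mod_ne0] := eqVneq (n %% 4) 0; [exists 2 | exists 0]; lia.
Qed.

Definition segment n a b : {set 'I_n} := [set x : 'I_n | a <= x < b].

Lemma dom_coloring_segment n a b : b <= n ->
  dom_coloring (path_rel n) (segment n a b) (chi_path (b - a)) (fun x => path_color (x - a)).
Proof.
move=> le_bn; apply/dom_coloringP; split=> [x | x y | x].
- by rewrite inE => /andP[le_ax lt_xb]; apply: path_color_lt; lia.
- rewrite !inE => /andP[le_ax _] /andP[le_ay _] /orP[/eqP xy | /eqP yx].
    by rewrite eq_sym (_ : y - a = (x - a).+1) ?path_colorS; lia.
  by rewrite (_ : x - a = (y - a).+1) ?path_colorS; lia.
rewrite inE => /andP[le_ax lt_xb].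
have [m_gt1 | m_le1] := ltnP 1 (b - a); last first.
  right; split=> y; rewrite inE => /andP[le_ay lt_yb]; last by rewrite /path_rel; lia.
  by move=> _; apply: ord_inj; lia.
have [|d lt_d dom_d] := path_color_dominated m_gt1 (_ : x - a < b - a); first lia.
have lt_ad : a + d < n by lia.
left; exists (Ordinal lt_ad); first by rewrite inE /=; lia.
move=> y; rewrite inE => /andP[le_ay lt_yb] cyx.
have := dom_d (y - a) (_ : y - a < b - a) cyx; rewrite /path_rel /=; lia.
Qed.

Lemma scattered_segment n a b : b <= n ->
  exists2 A, scattered (path_rel n) (segment n a b) A & #|A| = chi_path (b - a).
Proof.
move=> le_bn.
have lt_n (j : 'I_(chi_path (b - a))) : a + path_witness j < n.
  by have := path_witness_lt (ltn_ord j); lia.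
pose w j := Ordinal (lt_n j).
have w_inj : injective w.
  by move=> i j /(congr1 val) /= /addnI /path_witness_inj /ord_inj.
exists (w @: setT); last by rewrite card_imset // cardsT card_ord.
split.
  apply/subsetP => _ /imsetP[j _ ->]; rewrite inE /=.
  by have := path_witness_lt (ltn_ord j); lia.
move=> _ _ /imsetP[i _ ->] /imsetP[j _ ->] neq_ij v _.
have : path_witness i != path_witness j.
  by apply: contraNneq neq_ij => /path_witness_inj /ord_inj ->.
have := path_witness_addn2 i j; have := path_witness_addn2 j i.
rewrite /path_rel /=; lia.
Qed.

Lemma chi_dom_path_gap n a v : v <= n ->
  chi_dom (path_rel n) (segment n a v :|: segment n v.+1 n)
  = chi_path (v - a) + chi_path (n - v.+1).
Proof.
move=> le_vn.
have disj : [disjoint segment n a v & segment n v.+1 n].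
  by apply/pred0P => x /=; rewrite !inE; lia.
have sep : {in segment n a v & segment n v.+1 n,
             forall x y, ~~ path_rel n x y && ~~ path_rel n y x}.
  by move=> x y; rewrite !inE /path_rel; lia.
have [A1 scat1 card1] := scattered_segment a le_vn.
have [A2 scat2 card2] := scattered_segment v.+1 (leqnn n).
have col1 := dom_coloring_segment a le_vn.
have col2 := dom_coloring_segment v.+1 (leqnn n).
exact: (chi_dom_setU disj sep col1 scat1 card1 col2 scat2 card2).
Qed.

Lemma setT_segments n : [set: 'I_n] = segment n 0 n :|: segment n n.+1 n.
Proof. by apply/setP => x; rewrite !inE; have := ltn_ord x; lia. Qed.

Lemma setC1_segments n (i : 'I_n) : ~: [set i] = segment n 0 i :|: segment n i.+1 n.
Proof. by apply/setP => x; rewrite !inE -val_eqE /=; have := ltn_ord x; lia. Qed.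

Lemma setC2_segments n (i j : 'I_n) : val i = 0 -> val j = 1 ->
  ~: [set i; j] = segment n 1 1 :|: segment n 2 n.
Proof.
by move=> i0 j1; apply/setP => x; rewrite !inE -!val_eqE /= i0 j1; have := ltn_ord x; lia.
Qed.

Theorem mainTheorem8 (n : nat) (hn : 4 <= n) :
  St_dom (path_rel n) = (if n %% 4 == 3 then 2 else 1).
Proof.
have chi_setT : chi_dom (path_rel n) [set: 'I_n] = chi_path n.
  by rewrite setT_segments chi_dom_path_gap // subn0 subnS subnn addn0.
have chi_setC1 (i : 'I_n) :
    chi_dom (path_rel n) (~: [set i]) = chi_path i + chi_path (n - i.+1).
  by rewrite setC1_segments chi_dom_path_gap ?subn0 // ltnW.
case: ifP => [/eqP n_mod | /negbT n_mod].
  have [lt0n lt1n] : 0 < n /\ 1 < n by lia.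
  have <- : #|[set Ordinal lt0n; Ordinal lt1n]| = 2 by rewrite cards2.
  apply: St_dom_eq => [|Y].
    rewrite chi_setT setC2_segments // chi_dom_path_gap // subnn add0n.
    exact: chi_path_drop_two_neq.
  rewrite cards2 ltnS leq_eqVlt ltnS leqn0 cards_eq0 => /orP[/cards1P[i ->] | /eqP ->].
    by rewrite chi_setC1 chi_setT chi_path_splitE.
  by rewrite setC0.
have [i lt_in changes] := chi_path_split_neq hn n_mod.
have <- : #|[set Ordinal lt_in]| = 1 by rewrite cards1.
apply: St_dom_eq => [|Y]; first by rewrite chi_setC1 chi_setT.
by rewrite cards1 ltnS leqn0 cards_eq0 => /eqP ->; rewrite setC0.
Qed.
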